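(* Let $q=2^m$ with $m\ge2$, and let $G=q^2{:}\mathrm{SL}_2(q)$ be the primitive affine group $N\rtimes H$, where $N=\mathbb F_q^2$ acts regularly on itself by translation and $H=\mathrm{SL}_2(q)$ acts naturally on $\mathbb F_q^2$ (degree $q^2$). Then $\kappa(G)\ge3$.
   Context: A derangement is an element fixing no point; $\kappa(G)$ is the number of conjugacy classes of $G$ consisting of derangements. *)

From HB Require Import structures.
From mathcomp Require Import all_boot all_order all_fingroup all_algebra.
Set Implicit Arguments. Unset Strict Implicit. Unset Printing Implicit Defensive.
Import GRing.Theory.
Local Open Scope ring_scope.

Definition derangement (T : finType) (p : {perm T}) : bool := [forall x, p x != x].

Definition kappa (T : finType) (G : {set {perm T}}) : nat :=
  #|[set C in classes G | C \subset [set p | derangement p]]|.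

Definition affine_SL2 (F : finFieldType) : {set {perm 'rV[F]_2}} :=
  [set p : {perm 'rV[F]_2} | [exists A : 'M[F]_2, exists b : 'rV[F]_2,
            (\det A == 1 :> F) && [forall v, p v == v *m A + b]]].

(** The translation [v |-> v + e_0] and the shears [v |-> v S + a e_0], with
    [S = [[1, 1], [0, 1]]] and [a <> 0], are fixed-point-free elements of
    [G].  If [h : v |-> v M + t] conjugates one affine map into another, then
    [M] conjugates their linear parts, so the translation (linear part 1) is
    conjugate to no shear.  If [h] conjugates the shear with parameter [a] to
    the one with parameter [c], then [M] centralises [S], so [M] is upper
    triangular with equal diagonal entries [p], [p ^+ 2 = det M = 1] and
    [c = a p]; hence [c ^+ 2 = a ^+ 2].  As [q >= 4] there is a [c <> 0] with
    [c ^+ 2 <> 1], and the translation and the shears with parameters [1] and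
    [c] lie in three distinct derangement classes. *)
From HB Require Import structures.
From mathcomp Require Import all_boot all_order all_fingroup all_algebra.
Set Implicit Arguments. Unset Strict Implicit. Unset Printing Implicit Defensive.
Import GRing.Theory.

Lemma mem_class_self (gT : finGroupType) (A : {set gT}) x :
  x \in A -> x \in (x ^: A)%g.
Proof. by move=> xA; apply/imsetP; exists x; rewrite // conjgE mulKg. Qed.

Section Derangements.
Variable T : finType.
Implicit Types (x y : {perm T}) (G : {set {perm T}}).

Lemma derangementJ x y : derangement x -> derangement (x ^ y)%g.
Proof.
move=> /forallP dx; apply/forallP => z; rewrite conjgE !permM.
by apply: contra (dx ((y^-1)%g z)) => /eqP {2}<-; rewrite permK.
Qed.

Lemma class_derangement x G :
  derangement x -> (x ^: G)%g \subset [set p | derangement p].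
Proof.
by move=> dx; apply/subsetP => _ /imsetP[y _ ->]; rewrite inE derangementJ.
Qed.

Lemma kappa_ge_size G (s : seq {perm T}) :
  {subset s <= G} -> all (@derangement T) s ->
  uniq [seq (x ^: G)%g | x <- s] -> (size s <= kappa G)%N.
Proof.
move=> sG /allP ds /card_uniqP; rewrite size_map => <-.
apply: subset_leq_card; apply/subsetP => _ /mapP[x xs ->].
by rewrite inE mem_classes ?sG //= class_derangement ?ds.
Qed.

End Derangements.

Local Open Scope ring_scope.

Section AffineMaps.
Variables (F : finFieldType) (n : nat).
Implicit Types (A B M : 'M[F]_n) (a b t v : 'rV[F]_n).

Lemma affine_inj A b : A \in unitmx -> injective (fun v => v *m A + b).
Proof.
by move=> uA v w /addIr /(congr1 (mulmx^~ (invmx A))); rewrite !mulmxK.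
Qed.

Definition affine_perm A b (uA : A \in unitmx) := perm (@affine_inj A b uA).

Lemma affine_permE A b (uA : A \in unitmx) v : affine_perm b uA v = v *m A + b.
Proof. by rewrite permE. Qed.

Lemma mulmx_rV_inj A B : (forall v, v *m A = v *m B) -> A = B.
Proof. by move=> AB; apply/row_matrixP => i; rewrite !rowE AB. Qed.

Lemma affine_intertwine M t A a B b :
  (forall v, (v *m M + t) *m B + b = (v *m A + a) *m M + t) ->
  M *m B = A *m M /\ t *m B + b = a *m M + t.
Proof.
move=> hAB; have h0 := hAB 0; rewrite !mul0mx !add0r in h0.
split=> //; apply: mulmx_rV_inj => v; have := hAB v.
by rewrite !mulmxDl -!addrA h0 !mulmxA => /addIr.
Qed.

Lemma col_mulmx_rV v A j : (v *m A) 0 j = (v *m col j A) 0 0.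
Proof. by rewrite colE mulmxA -colE [RHS]mxE. Qed.

Lemma affine_perm_derangement A b (uA : A \in unitmx) j :
  col j A = col j 1%:M -> b 0 j != 0 -> derangement (affine_perm b uA).
Proof.
move=> Aj bj; apply/forallP => v; rewrite affine_permE.
move: bj; apply: contraNneq => /(congr1 (fun w : 'rV_n => w 0 j)).
rewrite [LHS]mxE col_mulmx_rV Aj -col_mulmx_rV mulmx1 => /eqP.
by rewrite -subr_eq0 addrAC subrr add0r.
Qed.

End AffineMaps.

Section AffineSL2.
Variable F : finFieldType.
Implicit Types (A B M : 'M[F]_2) (b t v : 'rV[F]_2).

Local Notation G := (affine_SL2 F).
Local Notation i0 := (ord0 : 'I_2).
Local Notation i1 := (ord_max : 'I_2).

Lemma affine_SL2_affine h :
  h \in G -> exists M t, \det M = 1 /\ forall v, h v = v *m M + t.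
Proof.
rewrite inE => /existsP[M /existsP[t /andP[/eqP dM /forallP hE]]].
by exists M, t; split => // v; apply/eqP.
Qed.

Lemma affine_perm_SL2 A b (uA : A \in unitmx) :
  \det A = 1 -> affine_perm b uA \in G.
Proof.
move=> dA; rewrite inE; apply/existsP; exists A; apply/existsP; exists b.
by rewrite dA eqxx; apply/forallP => v; rewrite affine_permE.
Qed.

Lemma affine_SL2_conj A B (a b : 'rV[F]_2)
    (uA : A \in unitmx) (uB : B \in unitmx) :
  affine_perm b uB \in (affine_perm a uA ^: G)%g ->
  exists M t, [/\ \det M = 1, M *m B = A *m M & t *m B + b = a *m M + t].
Proof.
case/imsetP => h /affine_SL2_affine[M [t [dM hE]]] hAB.
exists M, t; have [] // := @affine_intertwine _ _ M t A a B b.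
move=> v; have := congr1 (fun p : {perm _} => p (h v)) hAB.
by rewrite /= conjgE !permM permK !affine_permE !hE.
Qed.

Lemma det_mx22_upper M : M i1 i0 = 0 -> \det M = M i0 i0 * M i1 i1.
Proof.
move=> M10; rewrite -det_tr det_trig.
  by rewrite big_ord_recl big_ord1 !mxE; congr (_ * M _ _); apply: val_inj.
apply/is_trig_mxP => -[[|[|i]] Hi] [[|[|j]] Hj] // _.
by rewrite mxE -M10; congr (M _ _); apply: val_inj.
Qed.

Definition shear : 'M[F]_2 := \matrix_(i, j) (i <= j)%N%:R.

Lemma det_shear : \det shear = 1.
Proof. by rewrite det_mx22_upper !mxE ?mulr1. Qed.

Lemma unitmx_shear : shear \in unitmx.
Proof. by rewrite unitmxE det_shear unitr1. Qed.

Lemma shear_neq1 : shear != 1%:M.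
Proof.
by apply/eqP => /matrixP/(_ i0 i1); rewrite !mxE => /eqP; rewrite oner_eq0.
Qed.

Lemma col0_shear : col i0 shear = col i0 1%:M.
Proof. by apply/matrixP => -[[|[|i]] //] Hi j; rewrite !mxE. Qed.

Lemma commute_shear M :
  M *m shear = shear *m M -> M i1 i0 = 0 /\ M i0 i0 = M i1 i1.
Proof.
have mul2 k l (X Y : 'M[F]_2) : (X *m Y) k l = X k i0 * Y i0 l + X k i1 * Y i1 l.
  by rewrite mxE big_ord_recl big_ord1; congr (_ + X k _ * Y _ l); apply: val_inj.
move=> /matrixP MS; have := MS i0 i0; have := MS i0 i1.
rewrite !mul2 !mxE /= !(mulr1, mul1r, mulr0, mul0r, addr0, add0r).
rewrite [M i0 i0 + _]addrC => /addrI -> /eqP.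
by rewrite eq_sym -subr_eq0 addrAC subrr add0r => /eqP.
Qed.

Definition e0 : 'rV[F]_2 := delta_mx 0 i0.

Definition translation_e0 := affine_perm e0 (unitmx1 F 2).

Definition shear_map (a : F) := affine_perm (a *: e0) unitmx_shear.

Lemma translation_e0_derangement : derangement translation_e0.
Proof.
by apply: (affine_perm_derangement _ (erefl (col i0 1%:M))); rewrite mxE oner_eq0.
Qed.

Lemma shear_map_derangement a : a != 0 -> derangement (shear_map a).
Proof.
by move=> a0; apply: (affine_perm_derangement _ col0_shear); rewrite !mxE mulr1.
Qed.

Lemma shear_map_notin_translation_class a :
  shear_map a \notin (translation_e0 ^: G)%g.
Proof.
apply/negP => /affine_SL2_conj[M [t [dM MS _]]].
have uM : M \in unitmx by rewrite unitmxE dM unitr1.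
move: MS; rewrite mul1mx -{2}[M]mulmx1 => /(can_inj (mulKmx uM))/eqP.
exact/negP/shear_neq1.
Qed.

Lemma shear_map_class_sqr a c :
  shear_map c \in (shear_map a ^: G)%g -> c ^+ 2 = a ^+ 2.
Proof.
case/affine_SL2_conj => M [t [dM /commute_shear[M10 M00] /rowP/(_ i0)]].
rewrite mxE [RHS]mxE col_mulmx_rV col0_shear -col_mulmx_rV mulmx1.
rewrite -scalemxAl -rowE !mxE /= mulr1 [_ + t _ _]addrC => /addrI->.
by rewrite exprMn [M _ _ ^+ 2]expr2 {2}M00 -det_mx22_upper // dM mulr1.
Qed.

End AffineSL2.

Lemma exists_nonzero_sqr_neq1 (F : finFieldType) :
  (3 < #|F|)%N -> exists2 c : F, c != 0 & c ^+ 2 != 1.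
Proof.
move=> F4; pose S := [set x in [:: 0; 1; -1] : seq F].
have : (#|S| < #|F|)%N by rewrite cardsE (leq_ltn_trans (card_size _)).
rewrite -(cardsC S) -[X in (X < _)%N]addn0 ltn_add2l card_gt0.
case/set0Pn => c; rewrite !inE !negb_or => /and3P[c0 c1 cN1].
by exists c; rewrite // sqrf_eq1 negb_or c1.
Qed.

Theorem lemma4p7 (F : finFieldType) (m : nat) :
  (2 <= m)%N -> #|F| = (2 ^ m)%N -> (3 <= kappa (affine_SL2 F))%N.
Proof.
move=> m2 cardF.
have F4 : (3 < #|F|)%N by rewrite cardF (leq_trans _ (leq_pexp2l _ m2)).
have [c c0 c2] := exists_nonzero_sqr_neq1 F4.
pose s := [:: translation_e0 F; shear_map 1; shear_map c].
have sG : {subset s <= affine_SL2 F}.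
  move=> x; rewrite !in_cons in_nil orbF => /or3P[]/eqP->;
    by apply: affine_perm_SL2; rewrite ?det1 ?det_shear.
have self x : x \in s -> x \in (x ^: affine_SL2 F)%g.
  by move=> /sG/mem_class_self.
apply: (kappa_ge_size sG).
  by rewrite /= translation_e0_derangement !shear_map_derangement ?oner_eq0.
rewrite /= !inE andbT negb_or -andbA; apply/and3P; split.
- apply: contraNneq (shear_map_notin_translation_class (1 : F)) => ->.
  by apply: self; rewrite !inE eqxx ?orbT.
- apply: contraNneq (shear_map_notin_translation_class c) => ->.
  by apply: self; rewrite !inE eqxx ?orbT.
apply: contraNneq c2 => YZ; apply/eqP; rewrite -(expr1n F 2).
by apply: shear_map_class_sqr; rewrite YZ self // !inE eqxx ?orbT.
Qed.
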